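(* Let $\gamma$ be a gauge on $\mathbb{R}^d$ with skewness $\sigma$ and let $v\in\mathrm{SD}_\gamma$. Let $C\subset\mathbb{R}^d$ be a finite set with positive weights $w_c$, $w_C=\sum_{c\in C}w_c$, and for $M>0$ define $h_M(x)=\sum_{c\in C}w_c\,\gamma(x-c+Mv)$. Let $U\subset\mathbb{R}^d$ be bounded and $\tau>0$. Then there exists $M_{U,\tau}>0$ such that for every $M>M_{U,\tau}$, every $u\in U$ and every $q\in\partial h_M(u)$ we have $\gamma^\circ(-q)>\sigma w_C-\tau$.
   Context: A gauge $\gamma$ on $\mathbb{R}^d$ is the Minkowski functional of a convex compact set $B_\gamma$ with the origin in its interior (not necessarily symmetric). The dual gauge is $\gamma^\circ(p)=\max\{\langle p,x\rangle:\gamma(x)=1\}$. $\partial$ denotes the convex subdifferential. The skewness is $\sigma=\sup_{x\neq0}\gamma(x)/\gamma(-x)$ and $\mathrm{SD}_\gamma=\{v:\gamma(v)=\sigma\gamma(-v)=1\}$. *)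

From HB Require Import structures.
From mathcomp Require Import all_boot all_order all_algebra.
From mathcomp Require Import all_classical all_reals all_analysis.
Set Implicit Arguments. Unset Strict Implicit. Unset Printing Implicit Defensive.
Import Order.TTheory GRing.Theory Num.Theory.
Import numFieldNormedType.Exports.
Local Open Scope classical_set_scope.
Local Open Scope ring_scope.

Section Gauges.
Variables (R : realType) (d : nat).
Notation V := 'rV[R]_d.

Definition dotv (p x : V) : R := \sum_(i < d) p 0 i * x 0 i.

Definition convex_set_rV (B : set V) : Prop :=
  forall x y : V, B x -> B y -> forall l : R, 0 <= l <= 1 ->
    B (l *: x + (1 - l) *: y).

Definition gauge_body (B : set V) : Prop :=
  [/\ convex_set_rV B, compact B & nbhs (0 : V) B].

Definition gauge (B : set V) (x : V) : R :=
  inf [set t : R | 0 < t /\ exists b, B b /\ x = t *: b].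

Definition gauge_dual (B : set V) (p : V) : R :=
  sup [set dotv p x | x in [set x | gauge B x = 1]].

Definition skewness (B : set V) : R :=
  sup [set gauge B x / gauge B (- x) | x in [set x : V | x != 0]].

Definition SD (B : set V) : set V :=
  [set v | gauge B v = 1 /\ skewness B * gauge B (- v) = 1].

Definition subdiff (f : V -> R) (u : V) : set V :=
  [set q | forall y : V, f u + dotv q (y - u) <= f y].

Definition hM (B : set V) (C : seq V) (w : V -> R) (v : V) (M : R) (x : V) : R :=
  \sum_(c <- C) w c * gauge B (x - c + M *: v).

End Gauges.

(* Fix a gauge gamma with unit ball B, skewness sigma and v in SD_gamma, so
   gamma(v) = 1 and gamma(-sigma v) = sigma gamma(-v) = 1.  For q in the
   subdifferential of h_M at u, the subgradient inequality between u and
   u - M v gives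
       M <q, v>  >=  h_M(u) - h_M(u - M v)
                 =   sum_c w_c (gamma(u - c + M v) - gamma(u - c))
                 >=  M w_C - sum_c w_c (gamma(c - u) + gamma(u - c)),
   the last step by the triangle inequality gamma(M v) <= gamma(u - c + M v)
   + gamma(c - u).  The "asymmetry defect" sum_c w_c (gamma(c-u) + gamma(u-c))
   is bounded by some K uniformly for u in the bounded set U, since gamma is
   dominated by a multiple of the norm.  Finally sigma <q, v> =
   <-q, -sigma v> <= gamma°(-q), hence gamma°(-q) >= sigma w_C - sigma K / M,
   which exceeds sigma w_C - tau as soon as M > sigma K / tau. *)

From HB Require Import structures.
From mathcomp Require Import all_boot all_order all_algebra.
From mathcomp Require Import all_classical all_reals all_analysis.
From mathcomp Require Import ring lra.
Set Implicit Arguments. Unset Strict Implicit. Unset Printing Implicit Defensive.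
Import Order.TTheory GRing.Theory Num.Theory.
Import numFieldNormedType.Exports.
Local Open Scope classical_set_scope.
Local Open Scope ring_scope.

Section InnerProduct.
Variables (R : realType) (d : nat).
Implicit Types p x : 'rV[R]_d.

Lemma dotvNl p x : dotv (- p) x = - dotv p x.
Proof. by rewrite /dotv -sumrN; apply: eq_bigr => i _; rewrite mxE mulNr. Qed.

Lemma dotvNr p x : dotv p (- x) = - dotv p x.
Proof. by rewrite /dotv -sumrN; apply: eq_bigr => i _; rewrite mxE mulrN. Qed.

Lemma dotvZr p x (a : R) : dotv p (a *: x) = a * dotv p x.
Proof. by rewrite /dotv mulr_sumr; apply: eq_bigr => i _; rewrite mxE mulrCA. Qed.

Lemma dotv_le_norm p x : dotv p x <= (\sum_(i < d) `|p 0 i|) * `|x|.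
Proof.
rewrite /dotv mulr_suml; apply: ler_sum => i _.
apply: (le_trans (ler_norm _)); rewrite normrM ler_wpM2l //.
have -> : `|x| = mx_norm x by [].
rewrite mx_normrE.
exact: (le_bigmax _ (fun ij : 'I_1 * 'I_d => `|x ij.1 ij.2|) (0, i)).
Qed.

End InnerProduct.

Lemma bounded_set_norm_le (R : realType) (d : nat) (S : set 'rV[R]_d) :
  bounded_set S -> exists2 rho : R, 0 <= rho & forall x, S x -> `|x| <= rho.
Proof.
case=> M0 [_ HM0]; exists (`|M0| + 1) => [|x Sx]; first by rewrite addr_ge0.
apply: (HM0 (`|M0| + 1)) Sx.
by apply: (le_lt_trans (ler_norm M0)); rewrite ltrDl.
Qed.

Lemma subdiff_secant (R : realType) (d : nat) (f : 'rV[R]_d -> R) (u q z : 'rV[R]_d) :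
  subdiff f u q -> f u - f (u - z) <= dotv q z.
Proof. by move=> /(_ (u - z)); rewrite addrAC subrr add0r dotvNr => H; lra. Qed.

Section GaugeTheory.
Variables (R : realType) (d : nat) (B : set 'rV[R]_d).
Implicit Types (x y : 'rV[R]_d) (e l t : R).

Definition dilations x : set R := [set t | 0 < t /\ exists b, B b /\ x = t *: b].

Lemma dilations_lb x : has_lbound (dilations x).
Proof. by exists 0 => t [t0 _]; exact: ltW. Qed.

Lemma gauge_le_dilation x t : dilations x t -> gauge B x <= t.
Proof. by move=> Dt; apply: (ge_inf (dilations_lb x)). Qed.

Hypothesis hB : gauge_body B.

Lemma body_ball : exists2 r : R, 0 < r & forall y, `|y| < r -> B y.
Proof. by case: hB => _ _ /nbhs_norm0P [r r0 Hr]; exists r => // y Hy; exact: Hr. Qed.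

(* A ball of radius r inside B makes (|x| + 1) / r a dilation factor of x. *)
Lemma dilations_norm : exists2 L : R, 0 < L & forall x, dilations x (L * (`|x| + 1)).
Proof.
have [r r0 Hr] := body_ball; exists r^-1 => [|x]; first by rewrite invr_gt0.
have nx0 : 0 < `|x| + 1 by rewrite ltr_wpDl.
split; first by rewrite mulr_gt0 ?invr_gt0.
exists ((r / (`|x| + 1)) *: x); split.
  apply: Hr; rewrite normrZ gtr0_norm ?divr_gt0 //.
  by rewrite mulrAC ltr_pdivrMr // ltr_pM2l // ltrDl.
rewrite scalerA -[LHS]scale1r; congr (_ *: _).
by field; rewrite !gt_eqF.
Qed.

Lemma gauge_le_norm : exists2 L : R, 0 < L & forall x, gauge B x <= L * (`|x| + 1).
Proof. by have [L L0 HL] := dilations_norm; exists L => // x; apply: gauge_le_dilation. Qed.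

Lemma gauge_ge0 x : 0 <= gauge B x.
Proof.
have [L _ HL] := dilations_norm; apply: lb_le_inf; first by exists (L * (`|x| + 1)); apply: HL.
by move=> t [t0 _]; exact: ltW.
Qed.

Lemma gauge_approx x e : 0 < e -> exists2 t, dilations x t & t < gauge B x + e.
Proof.
move=> e0; have [L _ HL] := dilations_norm.
exact: (inf_adherent e0 (conj (ex_intro _ _ (HL x)) (dilations_lb x))).
Qed.

(* Triangle inequality: this is where the convexity of B is used. *)
Lemma gauge_subadd x y : gauge B (x + y) <= gauge B x + gauge B y.
Proof.
case: hB => cvx _ _; apply/ler_addgt0Pr => e e0.
have e20 : 0 < e / 2 by rewrite divr_gt0.
have [s [s0 [a [Ba xe]]] se] := gauge_approx x e20.
have [t [t0 [b [Bb ye]]] te] := gauge_approx y e20.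
have st0 : 0 < s + t by rewrite addr_gt0.
have l01 : 0 <= s / (s + t) <= 1.
  apply/andP; split; first by rewrite divr_ge0 ?ltW.
  by rewrite ler_pdivrMr // mul1r lerDl ltW.
apply: (@le_trans _ _ (s + t)); last by lra.
apply: gauge_le_dilation; split => //.
exists (s / (s + t) *: a + (1 - s / (s + t)) *: b); split; first exact: cvx.
rewrite xe ye scalerDr !scalerA.
by congr (_ *: _ + _ *: _); field; rewrite gt_eqF.
Qed.

Lemma gauge_revtri x y : gauge B y - gauge B (- x) <= gauge B (x + y).
Proof. by have := gauge_subadd (x + y) (- x); rewrite addrAC subrr add0r => H; lra. Qed.

Lemma gauge_homo_le x l : 0 < l -> gauge B (l *: x) <= l * gauge B x.
Proof.
move=> l0; apply/ler_addgt0Pr => e e0.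
have [t [t0 [b [Bb xe]]] te] := gauge_approx x (divr_gt0 e0 l0).
apply: (@le_trans _ _ (l * t)).
  apply: gauge_le_dilation; split; first by rewrite mulr_gt0.
  by exists b; rewrite xe scalerA.
have -> : l * gauge B x + e = l * (gauge B x + e / l) by field; rewrite gt_eqF.
by rewrite ler_pM2l // ltW.
Qed.

(* Positive homogeneity, from the inequality applied to l and l^-1. *)
Lemma gauge_homo x l : 0 < l -> gauge B (l *: x) = l * gauge B x.
Proof.
move=> l0; apply/eqP; rewrite eq_le gauge_homo_le //=.
have li0 : 0 < l^-1 by rewrite invr_gt0.
have := gauge_homo_le (l *: x) li0.
rewrite scalerA mulVf ?gt_eqF // scale1r => H.
by rewrite -(ler_pM2l li0) mulrA mulVf ?gt_eqF // mul1r.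
Qed.

(* The dual gauge dominates <p, x> on the unit sphere of gamma; the sup is
   finite because the sphere lies in twice the compact set B. *)
Lemma gauge_dual_ge p x : gauge B x = 1 -> dotv p x <= gauge_dual B p.
Proof.
move=> gx; have [_ /compact_bounded/bounded_set_norm_le [rho _ Hrho] _] := hB.
apply: ub_le_sup; last by exists x.
exists ((\sum_(i < d) `|p 0 i|) * (2 * rho)) => _ [y /= gy <-].
apply: (le_trans (dotv_le_norm p y)).
apply: ler_wpM2l; first by apply: sumr_ge0 => i _.
have [t [t0 [b [Bb ye]]] te] := gauge_approx y ltr01.
rewrite ye normrZ gtr0_norm //; apply: ler_pM => //; [exact: ltW | lra | exact: Hrho].
Qed.

End GaugeTheory.

Section SkewDirection.
Variables (R : realType) (d : nat) (B : set 'rV[R]_d).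
Hypothesis hB : gauge_body B.
Variable v : 'rV[R]_d.
Hypothesis hv : SD B v.

Lemma SD_skewness_gt0 : 0 < skewness B.
Proof.
case: hv => _ sv; have := gauge_ge0 hB (- v).
rewrite le_eqVlt => /predU1P [g0 | gpos].
  by move: sv; rewrite -g0 mulr0 => /eqP; rewrite eq_sym oner_eq0.
by rewrite -(pmulr_lgt0 _ gpos) sv.
Qed.

(* sigma <q, v> = <-q, -sigma v> and gamma(-sigma v) = 1. *)
Lemma SD_dual_bound q : skewness B * dotv q v <= gauge_dual B (- q).
Proof.
have s0 := SD_skewness_gt0; case: hv => _ sv.
have -> : skewness B * dotv q v = dotv (- q) (skewness B *: (- v)).
  by rewrite dotvZr dotvNl dotvNr opprK.
by apply: gauge_dual_ge; rewrite // gauge_homo.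
Qed.

End SkewDirection.

Section ShiftedWeber.
Variables (R : realType) (d : nat) (B : set 'rV[R]_d).
Hypothesis hB : gauge_body B.
Variables (C : seq 'rV[R]_d) (w : 'rV[R]_d -> R) (v : 'rV[R]_d).
Hypothesis w_ge0 : forall c, c \in C -> 0 <= w c.

Definition defect (u : 'rV[R]_d) : R :=
  \sum_(c <- C) w c * (gauge B (c - u) + gauge B (u - c)).

Lemma hM_shift M u : hM B C w v M (u - M *: v) = \sum_(c <- C) w c * gauge B (u - c).
Proof. by apply: eq_bigr => c _; rewrite addrAC subrK. Qed.

Lemma hM_increment M u : gauge B v = 1 -> 0 < M ->
  M * (\sum_(c <- C) w c) - defect u <= hM B C w v M u - hM B C w v M (u - M *: v).
Proof.
move=> gv M0; rewrite hM_shift /hM /defect mulr_sumr -!sumrB.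
rewrite big_seq [X in _ <= X]big_seq; apply: ler_sum => c cC.
have := gauge_revtri hB (u - c) (M *: v); rewrite opprB gauge_homo // gv mulr1.
have := w_ge0 cC; nra.
Qed.

(* On a bounded set the defect is uniformly bounded, since gamma is
   dominated by an affine function of the norm. *)
Lemma defect_bounded (U : set 'rV[R]_d) : bounded_set U ->
  exists2 K : R, 0 <= K & forall u, U u -> defect u <= K.
Proof.
move=> /bounded_set_norm_le [rho rho0 HU]; have [L L0 HL] := gauge_le_norm hB.
exists (\sum_(c <- C) w c * (2 * (L * (`|c| + rho + 1)))).
  rewrite big_seq; apply: sumr_ge0 => c cC; apply: mulr_ge0; first exact: w_ge0.
  by apply: mulr_ge0 => //; apply: mulr_ge0; [exact: ltW | rewrite !addr_ge0].
move=> u Uu; rewrite /defect big_seq [X in _ <= X]big_seq.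
apply: ler_sum => c cC; apply: ler_wpM2l; first exact: w_ge0.
have ncu : L * (`|c - u| + 1) <= L * (`|c| + rho + 1).
  by rewrite ler_pM2l // lerD2r; apply: (le_trans (ler_normB _ _)); rewrite lerD2l HU.
have := HL (c - u); have := HL (u - c); rewrite distrC; lra.
Qed.

End ShiftedWeber.

Theorem mainTheorem3 (R : realType) (d : nat) (B : set 'rV[R]_d)
  (hB : gauge_body B) (v : 'rV[R]_d) (hv : SD B v)
  (C : seq 'rV[R]_d) (hC : uniq C) (w : 'rV[R]_d -> R)
  (hw : forall c, c \in C -> 0 < w c)
  (U : set 'rV[R]_d) (hU : bounded_set U) (tau : R) (htau : 0 < tau) :
  exists MU : R, 0 < MU /\
    forall M : R, MU < M -> forall u : 'rV[R]_d, U u ->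
      forall q : 'rV[R]_d, subdiff (hM B C w v M) u q ->
        skewness B * (\sum_(c <- C) w c) - tau < gauge_dual B (- q).
Proof.
have w_ge0 c : c \in C -> 0 <= w c by move/hw/ltW.
have sig0 := SD_skewness_gt0 hB hv.
have [K K0 HK] := defect_bounded hB w_ge0 hU.
have sKt : 0 <= skewness B * K / tau.
  by apply: divr_ge0; [apply: mulr_ge0 => //; exact: ltW | exact: ltW].
exists (skewness B * K / tau + 1); split=> [|M MU u Uu q Hq]; first by lra.
have M0 : 0 < M by lra.
have sK : skewness B * K < M * tau by rewrite -ltr_pdivrMr //; lra.
have slope : M * (\sum_(c <- C) w c) - K <= M * dotv q v.
  have := subdiff_secant (M *: v) Hq; rewrite dotvZr.
  have := hM_increment hB w_ge0 u hv.1 M0; have := HK u Uu; lra.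
have := SD_dual_bound hB hv q; rewrite -(ltr_pM2l M0); nra.
Qed.
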